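(* There is a function $\varepsilon(k)\to0$ as $k\to\infty$ such that for every $k$, every $k$ families $F_1,\dots,F_k$ of functions with domain $X$ and codomain $\{0,1\}$, and every function $g:\{0,1\}^k\to\{0,1\}$, \[\mathrm{opt}_{\mathrm{std}}(\mathrm{COMPOSE}(F_1,\dots,F_k,g))\le(1+\varepsilon(k))\log_2(k)\sum_{i=1}^k\mathrm{opt}_{\mathrm{std}}(F_i).\]
   Context: For a family $F$ of functions from a set $X$ to a set $Y$, $\mathrm{opt}_{\mathrm{std}}(F)$ is the worst-case number of mistakes in the standard online learning model under optimal play: an adversary secretly fixes $f\in F$ and presents inputs $x_1,x_2,\dots\in X$ adaptively; after each input the learner guesses $f(x_t)$ and the adversary then reveals $f(x_t)$; a mistake is an incorrect guess; the learner minimizes and the adversary maximizes the number of mistakes. $\mathrm{COMPOSE}(F_1,\dots,F_k,g)$ is the family of all functions $x\mapsto g(f_1(x),\dots,f_k(x))$ on $X$ with $f_i\in F_i$ for each $i$. *)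

From HB Require Import structures.
From mathcomp Require Import all_boot all_order all_algebra.
From mathcomp Require Import all_classical all_reals all_analysis.
Set Implicit Arguments. Unset Strict Implicit. Unset Printing Implicit Defensive.
Import Order.TTheory GRing.Theory Num.Theory.
Local Open Scope classical_set_scope.
Local Open Scope ring_scope.

(* A deterministic online learner: given the history of (input, true label)
   pairs so far and the current input, it guesses the label. *)
Definition learner (X : Type) := seq (X * bool) -> X -> bool.

Fixpoint mistakes_from (X : Type) (L : learner X) (f : X -> bool)
  (hist : seq (X * bool)) (xs : seq X) : nat :=
  match xs with
  | [::] => 0%N
  | x :: xs' => ((L hist x != f x) : nat) + mistakes_from L f (rcons hist (x, f x)) xs'
  end.

Definition mistakes (X : Type) (L : learner X) (f : X -> bool) (xs : seq X) : nat :=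
  mistakes_from L f [::] xs.

(* Worst-case number of mistakes of L over all targets f in F and all finite
   input sequences (adaptive adversary vs deterministic learner). The value 0
   is included so that the empty family gets value 0. *)
Definition worst_mistakes (R : realType) (X : Type) (F : set (X -> bool))
  (L : learner X) : \bar R :=
  ereal_sup ([set 0%E] `|`
             [set ((mistakes L f xs)%:R)%:E | f in F & xs in [set: seq X]]).

Definition opt_std (R : realType) (X : Type) (F : set (X -> bool)) : \bar R :=
  ereal_inf [set worst_mistakes R F L | L in [set: learner X]].

Definition COMPOSE (X : Type) (k : nat) (F : 'I_k -> set (X -> bool))
  (g : {ffun 'I_k -> bool} -> bool) : set (X -> bool) :=
  [set h | exists fs : 'I_k -> X -> bool,
     (forall i, F i (fs i)) /\ h = (fun x => g [ffun i => fs i x])].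

From HB Require Import structures.
From mathcomp Require Import all_boot all_order all_algebra.
From mathcomp Require Import all_classical all_reals all_analysis.
From mathcomp Require Import zify ring lra.
Import Order.TTheory GRing.Theory Num.Theory.
Set Implicit Arguments. Unset Strict Implicit. Unset Printing Implicit Defensive.

(* Let L_i learn F_i with at most d_i mistakes and D = d_1 + ... + d_k.  On any
   run, the behaviour of all the L_i is determined by the inputs together with
   the set P of pairs (round, i) at which L_i errs, a set of at most D pairs.
   The halving algorithm over all such P, where rounds are counted among its
   own mistakes only, errs at most log2 #{P} times, and with a horizon of
   cD + 1 rounds there are at most 2^(cD) candidate sets P as soon as
   16 c k <= 2^c, which holds for c = log2 k + O(log log k).  Taking the L_i
   optimal gives opt(COMPOSE) <= c sum_i opt(F_i), and c / log2 k -> 1. *)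

Section Mistakes.
Variable X : Type.

Definition labelled (f : X -> bool) (xs : seq X) : seq (X * bool) :=
  [seq (x, f x) | x <- xs].

Definition mistake_at (L : learner X) (ys : seq (X * bool)) (t : nat) : bool :=
  if drop t ys is (x, y) :: _ then L (take t ys) x != y else false.

Lemma mistake_at_cat L f ys x zs :
  mistake_at L (labelled f (ys ++ x :: zs)) (size ys) = (L (labelled f ys) x != f x).
Proof.
by rewrite /mistake_at /labelled map_cat -(size_map (fun x => (x, f x)))
  drop_size_cat // take_size_cat.
Qed.

Lemma mistake_at_oversize L ys t : size ys <= t -> mistake_at L ys t = false.
Proof. by move=> le; rewrite /mistake_at drop_oversize. Qed.

Lemma mistakes_from_sum L f h xs :
  mistakes_from L f h xs =
  \sum_(t < size xs) mistake_at L (h ++ labelled f xs) (size h + t).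
Proof.
elim: xs h => [|x xs IH] h /=; first by rewrite big_ord0.
rewrite big_ord_recl IH size_rcons cat_rcons addn0.
rewrite /mistake_at drop_size_cat // take_size_cat //; congr (_ + _).
by apply: eq_bigr => t _; rewrite addSnnS.
Qed.

Lemma mistakes_sum L f xs :
  mistakes L f xs = \sum_(t < size xs) mistake_at L (labelled f xs) t.
Proof. by rewrite /mistakes mistakes_from_sum. Qed.

End Mistakes.

Section OptStd.
Variables (R : realType) (X : Type) (F : set (X -> bool)).
Local Open Scope ring_scope.
Local Open Scope ereal_scope.

Lemma opt_std_ge0 : 0 <= opt_std R F.
Proof.
apply: le_ereal_inf_tmp => _ [L _ <-].
by apply: ereal_sup_ubound; left.
Qed.

Lemma opt_std_le_worst L : opt_std R F <= worst_mistakes R F L.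
Proof. by apply: ereal_inf_lbound; exists L. Qed.

Lemma worst_mistakes_le L n :
  (forall f xs, F f -> (mistakes L f xs <= n)%N) -> worst_mistakes R F L <= n%:R%:E.
Proof.
move=> bound; apply: ge_ereal_sup => _ [->|[f Ff] [xs _ <-]].
  by rewrite lee_fin.
by rewrite lee_fin ler_nat bound.
Qed.

Lemma opt_std_fin_learner r : opt_std R F = r%:E ->
  exists (d : nat) (L : learner X),
    (d%:R <= r)%R /\ forall f xs, F f -> (mistakes L f xs <= d)%N.
Proof.
move=> optE; have r0 : (0 <= r)%R by rewrite -lee_fin -optE opt_std_ge0.
have : opt_std R F < (Num.truncn r).+1%:R%:E by rewrite optE lte_fin truncnS_gt.
case/ereal_inf_lt=> _ [L _ <-] worstL.
exists (Num.truncn r), L; split; first by rewrite truncn_le.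
move=> f xs Ff; rewrite -ltnS -(ltr_nat R) -lte_fin.
by apply: le_lt_trans worstL; apply: ereal_sup_ubound; right; exists f => //; exists xs.
Qed.

End OptStd.

Section Halving.
Variables (X : Type) (E : finType) (experts : {set E}) (predict : E -> seq X -> X -> bool).

Fixpoint consistent (e : E) (past : seq X) (hm : seq (X * bool)) : bool :=
  if hm is (x, y) :: hm' then (predict e past x == y) && consistent e (rcons past x) hm'
  else true.

Definition version_space (hm : seq (X * bool)) : {set E} :=
  [set e in experts | consistent e [::] hm].

Definition majority (hm : seq (X * bool)) (x : X) : bool :=
  #|version_space hm| <= 2 * #|[set e in version_space hm | predict e (unzip1 hm) x]|.

Definition record_mistake (hm : seq (X * bool)) (p : X * bool) : seq (X * bool) :=
  if majority hm p.1 != p.2 then rcons hm p else hm.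

Definition halving : learner X :=
  fun hist x => majority (foldl record_mistake [::] hist) x.

Lemma mistakes_from_halving f hist xs :
  mistakes_from halving f hist xs + size (foldl record_mistake [::] hist) =
  size (foldl record_mistake [::] (hist ++ labelled f xs)).
Proof.
elim: xs hist => [|x xs IH] hist /=; first by rewrite cats0.
rewrite -cat_rcons -IH -cats1 foldl_cat /= /record_mistake /halving.
by case: (majority _ x != f x); rewrite ?size_rcons /= ?addnS.
Qed.

Lemma consistent_rcons e past hm x y :
  consistent e past (rcons hm (x, y)) =
  consistent e past hm && (predict e (past ++ unzip1 hm) x == y).
Proof.
elim: hm past => [|[x' y'] hm IH] past /=; first by rewrite cats0 andbT.
by rewrite IH cat_rcons andbA.
Qed.

Lemma consistent_labelled e h past xs :
  (forall ys x zs, xs = ys ++ x :: zs -> predict e (past ++ ys) x = h x) ->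
  consistent e past (labelled h xs).
Proof.
elim: xs past => [|x xs IH] past agree //=.
rewrite -[past in predict e past]cats0 (agree [::] x xs) // eqxx /=.
apply: IH => ys x' zs xsE; rewrite cat_rcons.
by apply: (agree (x :: ys) x' zs); rewrite xsE.
Qed.

Lemma card_version_space_mistake hm x y : majority hm x != y ->
  2 * #|version_space (rcons hm (x, y))| <= #|version_space hm|.
Proof.
rewrite /majority; set V := version_space hm; set A := [set e | predict e (unzip1 hm) x].
have splitV : #|V :&: A| + #|V :\: A| = #|V| by rewrite cardsID.
have -> : [set e in V | predict e (unzip1 hm) x] = V :&: A.
  by apply/setP => e; rewrite !inE.
have -> : version_space (rcons hm (x, y)) = if y then V :&: A else V :\: A.
  apply/setP => e; rewrite /V !inE consistent_rcons andbA.
  by case: y; rewrite !inE ?eqbF_neg ?eqb_id // andbC.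
case: y => /=; lia.
Qed.

Variables (h : X -> bool) (H : nat).
Hypothesis realizable : forall xs, size xs <= H.+1 ->
  exists2 e, e \in experts & consistent e [::] (labelled h xs).
Hypothesis few_experts : #|experts| <= 2 ^ H.

Lemma halving_mistake_step ys x :
  size ys <= H -> 2 ^ size ys * #|version_space (labelled h ys)| <= #|experts| ->
  majority (labelled h ys) x != h x ->
  size (rcons ys x) <= H /\
  2 ^ size (rcons ys x) * #|version_space (labelled h (rcons ys x))| <= #|experts|.
Proof.
move=> szys invys mistake.
have halved := card_version_space_mistake mistake; rewrite -map_rcons in halved.
have inv' : 2 ^ size (rcons ys x) * #|version_space (labelled h (rcons ys x))| <= #|experts|.
  by rewrite size_rcons expnS -mulnA mulnCA (leq_trans _ invys) // leq_mul2l halved orbT.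
split=> //.
have [|e e_exp e_cons] := @realizable (rcons ys x); first by rewrite size_rcons.
have nonempty : 0 < #|version_space (labelled h (rcons ys x))|.
  by apply/card_gt0P; exists e; rewrite inE e_exp.
rewrite -(leq_exp2l _ _ (isT : 1 < 2)) (leq_trans _ few_experts) //.
by rewrite (leq_trans _ inv') // leq_pmulr.
Qed.

Lemma halving_mistakes_le xs : mistakes halving h xs <= H.
Proof.
rewrite /mistakes -[mistakes_from _ _ _ _]addn0 (mistakes_from_halving h [::] xs) /=.
suff /(_ [::]) : forall ys, size ys <= H ->
    2 ^ size ys * #|version_space (labelled h ys)| <= #|experts| ->
    size (foldl record_mistake (labelled h ys) (labelled h xs)) <= H.
  apply; rewrite // mul1n subset_leq_card //.
  by apply/fintype.subsetP => e; rewrite inE => /andP[].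
elim: xs => [|x xs IH] ys szys invys /=; first by rewrite size_map.
rewrite /record_mistake /=; case: ifP => [mistake | _]; last exact: IH.
have [szys' invys'] := halving_mistake_step szys invys mistake.
by rewrite -map_rcons; apply: IH.
Qed.

End Halving.

Section ErrorPatterns.
Variables (X : Type) (k T : nat) (L : 'I_k -> learner X) (g : {ffun 'I_k -> bool} -> bool).

Definition composite (fs : 'I_k -> X -> bool) (x : X) : bool := g [ffun i => fs i x].

(* An expert P guesses the rounds (t, i) at which L_i errs: it replays each L_i
   on the past inputs, feeding it its own guesses flipped at the rounds of P,
   and predicts g of the flipped guesses. *)
Definition flipped (P : {set 'I_T * 'I_k}) (t : nat) (i : 'I_k) : bool :=
  [exists s : 'I_T, (val s == t) && ((s, i) \in P)].

Definition simulated_history P i (xs : seq X) : seq (X * bool) :=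
  foldl (fun hist x => rcons hist (x, L i hist x (+) flipped P (size hist) i)) [::] xs.

Definition pattern_predict P (xs : seq X) (x : X) : bool :=
  g [ffun i => L i (simulated_history P i xs) x (+) flipped P (size xs) i].

Definition error_pattern (fs : 'I_k -> X -> bool) (xs : seq X) : {set 'I_T * 'I_k} :=
  [set p : 'I_T * 'I_k | mistake_at (L p.2) (labelled (fs p.2) xs) p.1].

Lemma flipped_error_pattern fs xs t i : t < T ->
  flipped (error_pattern fs xs) t i = mistake_at (L i) (labelled (fs i) xs) t.
Proof.
move=> ltT; apply/existsP/idP => [[s /andP[/eqP <-]]|mis]; first by rewrite inE.
by exists (Ordinal ltT); rewrite eqxx inE.
Qed.

Lemma simulated_error_pattern fs i ys zs : size ys <= T ->
  simulated_history (error_pattern fs (ys ++ zs)) i ys = labelled (fs i) ys.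
Proof.
elim/last_ind: ys zs => [|ys y IH] zs //; rewrite size_rcons => ltT.
rewrite /simulated_history foldl_rcons -/(simulated_history _ i ys) cat_rcons.
rewrite IH; last exact: ltnW.
rewrite /labelled size_map flipped_error_pattern // mistake_at_cat map_rcons.
by case: (L i _ y); case: (fs i y).
Qed.

Lemma consistent_error_pattern fs xs : size xs <= T ->
  consistent pattern_predict (error_pattern fs xs) [::] (labelled (composite fs) xs).
Proof.
move=> leT; apply: consistent_labelled => ys x zs xsE; rewrite xsE /pattern_predict.
have ltT : size ys < T by move: leT; rewrite xsE size_cat /=; lia.
congr g; apply/ffunP => i; rewrite !ffunE simulated_error_pattern; last exact: ltnW.
rewrite flipped_error_pattern // mistake_at_cat.
by case: (L i _ x); case: (fs i x).
Qed.

Lemma card_error_pattern fs xs : size xs <= T ->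
  #|error_pattern fs xs| = \sum_i mistakes (L i) (fs i) xs.
Proof.
move=> leT; set P := error_pattern fs xs.
have -> : #|P| = \sum_(p : 'I_T * 'I_k) ((p.1, p.2) \in P : nat).
  by rewrite -sum1_card big_mkcond; apply: eq_bigr => -[t i].
rewrite -(pair_bigA _ (fun t i => ((t, i) \in P : nat))) exchange_big /=.
apply: eq_bigr => i _; rewrite mistakes_sum.
rewrite (big_ord_widen T (fun t => mistake_at (L i) (labelled (fs i) xs) t : nat) leT).
rewrite [RHS]big_mkcond /=; apply: eq_bigr => t _; rewrite inE /=.
by case: ltnP => // le; rewrite mistake_at_oversize // size_map.
Qed.

End ErrorPatterns.

Lemma card_small_sets (T : finType) D :
  #|[set P : {set T} | #|P| <= D]| = \sum_(j < D.+1) 'C(#|T|, j).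
Proof.
rewrite -sum1_card (partition_big (fun P : {set T} => inord #|P| : 'I_D.+1) xpredT) //=.
apply: eq_bigr => j _; rewrite -card_draws -sum1_card; apply: eq_bigl => P.
rewrite !inE; apply/andP/eqP => [[le /eqP <-]|Pj]; first by rewrite inordK.
split; first by rewrite Pj -ltnS ltn_ord.
by apply/eqP/val_inj; rewrite /= Pj inord_val.
Qed.

Lemma ffact_le_expn n q m : n <= q -> n ^_ m <= q ^ m.
Proof.
move=> nq; elim: m => [|m IH]; first by rewrite ffactn0.
by rewrite ffactnSr expnS mulnC leq_mul // (leq_trans (leq_subr _ _)).
Qed.

Lemma exp2_le_fact j : 2 ^ j <= 2 * j`!.
Proof.
elim: j => [|j IH] //; rewrite expnS factS.
case: j IH => [|j] IH //; move: IH (fact_gt0 j.+1); lia.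
Qed.

Lemma sum_le_geometric (a : nat -> nat) Q n :
  (forall j, a j * 2 ^ j <= Q) -> \sum_(j < n) a j <= 2 * Q.
Proof.
move=> aQ; have pos : 0 < 2 ^ n by rewrite expn_gt0.
suff : 2 ^ n * \sum_(j < n) a j + 2 * Q <= 2 * Q * 2 ^ n by nia.
clear pos; elim: n => [|n IH]; first by rewrite big_ord0 muln0 expn0 muln1.
rewrite big_ord_recr /= expnS; move: IH (aQ n).
by set p := 2 ^ n; set S := \sum_(_ < n) _; nia.
Qed.

(* (1 + 1/q)^m <= sum_j 1/j! <= 4, using j! >= 2^(j-1). *)
Lemma expnS_le m q : m <= q -> q.+1 ^ m <= 4 * q ^ m.
Proof.
move=> mq; rewrite -addn1 expnDn (_ : 4 = 2 * 2) // -mulnA.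
apply: (@sum_le_geometric (fun j => 'C(m, j) * (q ^ (m - j) * 1 ^ j)) _ m.+1) => j.
rewrite exp1n muln1; case: (leqP j m) => [jm|mj]; last by rewrite bin_small.
have binj : 'C(m, j) * j`! <= q ^ j by rewrite bin_ffact ffact_le_expn.
have -> : q ^ m = q ^ j * q ^ (m - j) by rewrite -expnD subnKC.
apply: (@leq_trans ('C(m, j) * q ^ (m - j) * (2 * j`!))).
  by rewrite leq_mul2l exp2_le_fact orbT.
have -> : 'C(m, j) * q ^ (m - j) * (2 * j`!) = 2 * ('C(m, j) * j`! * q ^ (m - j)) by ring.
by rewrite leq_mul2l /= leq_mul2r binj orbT.
Qed.

Lemma sum_binomial_mul_le n D q : 0 < q -> D <= n ->
  (\sum_(j < D.+1) 'C(n, j)) * q ^ (n - D) <= q.+1 ^ n.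
Proof.
move=> q0 Dn; rewrite -[q.+1]addn1 expnDn big_distrl /=.
pose F j := 'C(n, j) * (q ^ (n - j) * 1 ^ j).
apply: (@leq_trans (\sum_(j < D.+1) F j)).
  apply: leq_sum => j _; rewrite /F exp1n muln1 leq_mul2l leq_pexp2l ?orbT //.
  by rewrite leq_sub2l // -ltnS.
rewrite (big_ord_widen n.+1 F (_ : D.+1 <= n.+1)) // big_mkcond /=.
by apply: leq_sum => j _; case: ifP.
Qed.

Lemma sum_binomial_le c k D : 0 < c -> 0 < k -> 16 * (c * k) <= 2 ^ c ->
  \sum_(j < D.+1) 'C((c * D).+1 * k, j) <= 2 ^ (c * D).
Proof.
move=> c0 k0 ck; case: D => [|D]; first by rewrite big_ord1 bin0 muln0.
set q := c * k; set n := _ * k; set S := \sum_(_ < _) _.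
have q0 : 0 < q by rewrite muln_gt0 c0.
have nE : n = q * D.+1 + k by rewrite /n /q; lia.
have kq : k <= q by rewrite /q leq_pmull.
have pow_n : q.+1 ^ n <= 4 ^ D.+2 * q ^ n.
  have pow_q : (q.+1 ^ q) ^ D.+1 <= (4 * q ^ q) ^ D.+1 by rewrite leq_exp2r // expnS_le.
  rewrite nE !expnD (expnM q.+1 q) (expnM q q).
  apply: leq_trans (leq_mul pow_q (expnS_le kq)) _.
  by rewrite expnMn !expnS; apply: eq_leq; ring.
have S_le : S <= 4 ^ D.+2 * q ^ D.+1.
  have qnD : 0 < q ^ (n - D.+1) by rewrite expn_gt0 q0.
  have Dn : D.+1 <= n by rewrite nE (leq_trans _ (leq_addr _ _)) // leq_pmull.
  rewrite -(leq_pmul2r qnD) -mulnA -expnD subnKC //.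
  exact: leq_trans (sum_binomial_mul_le q0 Dn) pow_n.
apply: (leq_trans S_le); rewrite expnS -mulnA -expnMn mulnC expnM.
apply: (@leq_trans ((16 * q) ^ D.+1)); last by rewrite leq_exp2r.
have -> : (16 * q) ^ D.+1 = 4 ^ D.+1 * (4 * q) ^ D.+1 by rewrite -expnMn mulnA.
by rewrite [_ * 4]mulnC leq_mul2r; apply/orP; right; rewrite expnS leq_pmulr // expn_gt0.
Qed.

(* The constants are just large enough for mistake_rate_spec. *)
Definition rate_overhead (t : nat) : nat := 2 * trunc_log 2 t.+1 + 9.

Definition mistake_rate (k : nat) : nat := trunc_log 2 k + rate_overhead (trunc_log 2 k).

Lemma rate_overhead_gt0 t : 0 < rate_overhead t.
Proof. by rewrite /rate_overhead addn_gt0 orbT. Qed.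

Lemma mistake_rate_gt0 k : 0 < mistake_rate k.
Proof. by rewrite /mistake_rate addn_gt0 rate_overhead_gt0 orbT. Qed.

Lemma mistake_rate_spec k : 0 < k -> 16 * (mistake_rate k * k) <= 2 ^ mistake_rate k.
Proof.
move=> k0; rewrite /mistake_rate /rate_overhead.
set t := trunc_log 2 k; set u := trunc_log 2 t.+1.
have kA : k < 2 ^ t.+1 by apply: trunc_log_ltn.
have tB : t.+1 < 2 ^ u.+1 by apply: trunc_log_ltn.
have uB : u.+1 < 2 ^ u.+1 by apply: ltn_expl.
rewrite (_ : t + (2 * u + 9) = t.+1 + u.+1 * 2 + 6); last by lia.
rewrite !expnD expnM; move: kA tB uB; set A := 2 ^ t.+1; set B := 2 ^ u.+1.
rewrite (_ : 2 ^ 6 = 64) // => kA tB uB.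
have cB : t.+1 + u.+1 * 2 + 6 <= 4 * B ^ 2 by rewrite expnS expn1; nia.
apply: (@leq_trans (16 * (4 * B ^ 2 * A))); first by rewrite leq_mul2l leq_mul // ltnW.
by apply: eq_leq; ring.
Qed.

Lemma sqr_le_exp2 n : (n + 4) ^ 2 <= 2 ^ (n + 4).
Proof.
elim: n => [|n IH] //; rewrite addSn [2 ^ _]expnS.
by move: IH; set p := 2 ^ (n + 4); nia.
Qed.

Lemma rate_overhead_small M : exists T, forall t, T <= t -> M * rate_overhead t <= t.
Proof.
exists (2 ^ (4 * M + 9)) => t tT; rewrite /rate_overhead; set s := trunc_log 2 t.+1.
have s_big : 4 * M + 9 <= s by apply: trunc_log_max => //; apply: leq_trans tT _.
have s_t : 2 ^ s <= t.+1 by apply: trunc_logP.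
have := sqr_le_exp2 (s - 4); rewrite subnK; last by lia.
by move: s_big s_t; set p := 2 ^ s; nia.
Qed.

Section ComposeLearner.
Variables (X : Type) (k : nat) (L : 'I_k -> learner X) (g : {ffun 'I_k -> bool} -> bool).

Definition compose_learner (D : nat) : learner X :=
  halving [set P : {set 'I_(mistake_rate k * D).+1 * 'I_k} | #|P| <= D]
    (pattern_predict L g).

Lemma compose_learner_mistakes fs d xs : 0 < k ->
  (forall i ys, mistakes (L i) (fs i) ys <= d i) ->
  mistakes (compose_learner (\sum_i d i)) (composite g fs) xs <=
  mistake_rate k * \sum_i d i.
Proof.
move=> k0 bounds; apply: halving_mistakes_le => [ys szys|].
  exists (error_pattern _ L fs ys); last exact: consistent_error_pattern.
  by rewrite inE card_error_pattern // leq_sum.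
rewrite card_small_sets card_prod !card_ord.
exact: sum_binomial_le (mistake_rate_gt0 k) k0 (mistake_rate_spec k0).
Qed.

End ComposeLearner.

Section ComposeOptStd.
Variables (R : realType) (X : Type) (k : nat) (F : 'I_k -> set (X -> bool)).
Variable g : {ffun 'I_k -> bool} -> bool.
Local Open Scope ring_scope.
Local Open Scope ereal_scope.

Lemma opt_std_COMPOSE_le : (0 < k)%N ->
  opt_std R (COMPOSE F g) <= (mistake_rate k)%:R%:E * \sum_(i < k) opt_std R (F i).
Proof.
move=> k0.
have [[i0 inf]|fin] := pselect (exists i, opt_std R (F i) = +oo).
  have -> : \sum_(i < k) opt_std R (F i) = +oo.
    apply/esum_eqyP => [i _|]; last by exists i0.
    by rewrite gt_eqF // (lt_le_trans _ (opt_std_ge0 _ _)) ?ltNy0.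
  by rewrite gt0_muley ?leey // lte_fin ltr0n mistake_rate_gt0.
have : forall i, exists dL : nat * learner X,
    dL.1%:R%:E <= opt_std R (F i) /\
    forall f xs, F i f -> (mistakes dL.2 f xs <= dL.1)%N.
  move=> i; have := opt_std_ge0 R (F i).
  case optE : (opt_std R (F i)) => [r| |] // _; last by case: fin; exists i.
  have [d [L [dr bound]]] := opt_std_fin_learner optE.
  by exists (d, L); rewrite lee_fin.
case/choice => dL /all_and2 [d_opt bounds].
pose d i := (dL i).1; pose L i := (dL i).2.
apply: le_trans (opt_std_le_worst _ _ (compose_learner L g (\sum_i d i))) _.
apply: le_trans (worst_mistakes_le _ _) _ => [_ xs [fs [Ffs ->]]|].
  by apply: compose_learner_mistakes => // i ys; apply: bounds.
rewrite natrM EFinM natr_sum -sumEFin lee_wpmul2l ?lee_fin //.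
by apply: lee_sum => i _; apply: d_opt.
Qed.

End ComposeOptStd.

Section RateEps.
Variable R : realType.
Local Open Scope classical_set_scope.
Local Open Scope ring_scope.

Definition rate_eps (k : nat) : R := (mistake_rate k)%:R * ln 2 / ln k%:R - 1.

Lemma ln2_gt0 : 0 < ln (2 : R).
Proof. by rewrite ln_gt0 // ltr1n. Qed.

Lemma rate_epsE k : (2 <= k)%N ->
  (1 + rate_eps k) * (ln k%:R / ln 2) = (mistake_rate k)%:R.
Proof.
move=> k2; have lnk : 0 < ln (k%:R : R) by rewrite ln_gt0 // ltr1n.
by rewrite /rate_eps addrC subrK; field; rewrite !lt0r_neq0 ?ln2_gt0.
Qed.

Lemma ln_trunc_log k : (0 < k)%N ->
  (trunc_log 2 k)%:R * ln 2 <= ln (k%:R : R) < (trunc_log 2 k).+1%:R * ln 2.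
Proof.
move=> k0; rewrite !mulr_natl -!lnXn ?ltr0n // -!natrX.
rewrite ler_ln ?ltr_ln ?posrE ?ltr0n ?expn_gt0 // ler_nat ltr_nat.
by rewrite trunc_logP ?trunc_log_ltn.
Qed.

Lemma rate_eps_bounds k : (2 <= k)%N ->
  0 <= rate_eps k <= (rate_overhead (trunc_log 2 k))%:R / (trunc_log 2 k)%:R.
Proof.
move=> k2; set t := trunc_log 2 k; set o := rate_overhead t.
have /andP[lnk_ge lnk_lt] := ln_trunc_log (ltnW k2); rewrite -/t -natr1 in lnk_ge lnk_lt.
have t0 : 0 < t%:R :> R by rewrite ltr0n trunc_log_gt0.
have o1 : 1 <= o%:R :> R by rewrite ler1n rate_overhead_gt0.
have lnk : 0 < ln (k%:R : R) by rewrite ln_gt0 // ltr1n.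
have rateE : (mistake_rate k)%:R = t%:R + o%:R :> R by rewrite -natrD.
have a0 := ln2_gt0.
rewrite /rate_eps rateE subr_ge0 ler_pdivlMr // mul1r lerBlDl ler_pdivrMr //.
have -> : 1 + o%:R / t%:R = (t%:R + o%:R) / t%:R :> R by field; rewrite lt0r_neq0.
by rewrite mulrAC ler_pdivlMr //; apply/andP; split; nra.
Qed.

Lemma rate_eps_cvg : rate_eps @ \oo --> 0.
Proof.
apply/cvgrPdist_lt => e e0; pose M := (Num.truncn e^-1).+1.
have Me : 1 < M%:R * e by rewrite -ltr_pdivrMr // div1r truncnS_gt.
have [T overhead_small] := rate_overhead_small M.
exists (2 ^ (maxn T 1))%N => // k /= le.
have k2 : (2 <= k)%N by apply: leq_trans le; rewrite -{1}(expn1 2) leq_exp2l ?leq_maxr.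
have tT : (T <= trunc_log 2 k)%N.
  by apply: trunc_log_max => //; apply: leq_trans le; rewrite leq_exp2l ?leq_maxl.
have /andP[eps_ge0 eps_le] := rate_eps_bounds k2.
rewrite sub0r normrN ger0_norm //; apply: le_lt_trans eps_le _.
have t0 : 0 < (trunc_log 2 k)%:R :> R by rewrite ltr0n trunc_log_gt0.
move/(_ _ tT): overhead_small; rewrite -(ler_nat R) natrM.
have o0 : 0 < (rate_overhead (trunc_log 2 k))%:R :> R by rewrite ltr0n rate_overhead_gt0.
by rewrite ltr_pdivrMr //; nra.
Qed.

End RateEps.

Local Open Scope classical_set_scope.
Local Open Scope ring_scope.

Theorem mainTheorem13 (R : realType) :
  exists eps : nat -> R, eps @ \oo --> 0 /\
  forall (k : nat), (2 <= k)%N ->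
  forall (X : Type) (F : 'I_k -> set (X -> bool)) (g : {ffun 'I_k -> bool} -> bool),
    (opt_std R (COMPOSE F g) <=
     ((1 + eps k) * (ln (k%:R) / ln 2))%:E * \sum_(i < k) opt_std R (F i))%E.
Proof.
exists (@rate_eps R); split; first exact: rate_eps_cvg.
move=> k k2 X F g; rewrite rate_epsE //.
exact: opt_std_COMPOSE_le (ltnW k2).
Qed.
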